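(* Let $p$ be a prime, $w\ge1$, $n\ge2$, and $\mu\ge1$ an integer with $2^\mu<p$. Let $C=\{\mathbf x\in\mathbb{F}_{p^w}^n:\sum_{i=1}^nx_i=0\}$ be the code of additive secret sharings of $0$. For any family $\boldsymbol\tau=(\tau^{(1)},\dots,\tau^{(n)})$ with $\tau^{(j)}:\mathbb{F}_{p^w}\to\{0,1\}^\mu$, \[ SD(\boldsymbol\tau(C),\boldsymbol\tau(\mathcal U_n))\le\frac12\cdot2^\mu\cdot c_\mu^{n-2},\qquad c_\mu=\frac{2^\mu\sin(\pi/2^\mu)}{p\sin(\pi/p)}. \]
   Context: For $S\subseteq\mathbb{F}_{p^w}^n$, $\boldsymbol\tau(S)$ is the distribution of $(\tau^{(1)}(x_1),\dots,\tau^{(n)}(x_n))$ with $\mathbf x$ uniform on $S$; $\mathcal U_n=\mathbb{F}_{p^w}^n$; $SD$ denotes statistical distance. *)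

From HB Require Import structures.
From mathcomp Require Import all_boot all_order all_algebra all_field.
From mathcomp Require Import all_classical all_reals all_analysis.
Set Implicit Arguments. Unset Strict Implicit. Unset Printing Implicit Defensive.
Import Order.TTheory GRing.Theory Num.Theory.
Local Open Scope ring_scope.

(* Vectors in F^n are row vectors 'rV[F]_n; x_i is x ord0 i.
   A leakage family tau = (tau^(1),...,tau^(n)) is tau : 'I_n -> F -> mu.-tuple bool,
   i.e. tau^(j) : F -> {0,1}^mu. *)

Definition sum_zero_code (F : finFieldType) (n : nat) : {set 'rV[F]_n} :=
  [set x : 'rV[F]_n | \sum_(i < n) x ord0 i == 0].

Definition full_space (F : finFieldType) (n : nat) : {set 'rV[F]_n} := [set: 'rV[F]_n]%SET.

Definition leak (F : finFieldType) (n mu : nat) (tau : 'I_n -> F -> mu.-tuple bool)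
  (x : 'rV[F]_n) : {ffun 'I_n -> mu.-tuple bool} :=
  [ffun i => tau i (x ord0 i)].

Definition leak_dist (R : realType) (F : finFieldType) (n mu : nat)
  (tau : 'I_n -> F -> mu.-tuple bool) (S : {set 'rV[F]_n})
  (y : {ffun 'I_n -> mu.-tuple bool}) : R :=
  #|[set x in S | leak tau x == y]|%:R / #|S|%:R.

Definition SD (R : realType) (T : finType) (P Q : T -> R) : R :=
  2^-1 * \sum_(y : T) `|P y - Q y|.

Definition c_mu (R : realType) (p mu : nat) : R :=
  (2 ^+ mu * sin (pi / 2 ^+ mu)) / (p%:R * sin (pi / p%:R)).

From HB Require Import structures.
From mathcomp Require Import all_boot all_order all_algebra all_field.
From mathcomp Require Import all_classical all_reals all_analysis.
From mathcomp Require Import complex ring lra.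
Import Order.TTheory GRing.Theory Num.Theory Normc.

(* Expand the indicator of the code [sum_i x_i = 0] in the additive characters
   of F.  The trivial character reproduces the uniform leakage distribution
   exactly, so the statistical distance is controlled by the nontrivial
   characters chi, each contributing a product over the parties i of
   sum_b |A_i(b)|, where A_i(b) sums chi over the leakage class
   [tau^(i) = b].  A nontrivial character takes every p-th root of unity
   equally often, so sum_b |A_i(b)| is at most |F|/p times a sum of moduli of
   class sums of p-th roots of unity over 2^mu classes.  A class of m roots
   has modulus at most sin(pi m/p)/sin(pi/p), and concavity of sin bounds the
   total by 2^mu sin(pi/2^mu)/sin(pi/p); hence sum_b |A_i(b)| <= |F| c_mu.
   All factors but two are bounded in this way, and the remaining two are
   handled on average over chi by Cauchy-Schwarz and Parseval. *)

Set Implicit Arguments.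
Unset Strict Implicit.
Unset Printing Implicit Defensive.

Local Open Scope ring_scope.

Lemma ler_sum_sign (R : numDomainType) (I : finType) (P Q : pred I) (f : I -> R) :
  (forall i, P i -> ~~ Q i -> f i <= 0) -> (forall i, Q i -> ~~ P i -> 0 <= f i) ->
  \sum_(i | P i) f i <= \sum_(i | Q i) f i.
Proof.
move=> fPQ fQP; rewrite (bigID Q) [X in _ <= X](bigID P) /=.
rewrite (eq_bigl (fun i => Q i && P i)) => [|i]; last by rewrite andbC.
rewrite lerD2l (@le_trans _ _ 0) //; first by apply: sumr_le0 => i /andP[]; exact: fPQ.
by apply: sumr_ge0 => i /andP[]; exact: fQP.
Qed.

Lemma sum_card_fibers (T B : finType) (f : T -> B) :
  (\sum_b #|[set x | f x == b]|)%N = #|T|.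
Proof.
rewrite -sum1_card (partition_big f xpredT) //=; apply: eq_bigr => b _.
by rewrite -sum1_card; apply: eq_bigl => x; rewrite inE.
Qed.

Lemma sum_prod_rV (V : comPzSemiRingType) (T : finType) (n : nat) (f : 'I_n -> T -> V) :
  \sum_(x : 'rV[T]_n) \prod_i f i (x ord0 i) = \prod_i \sum_z f i z.
Proof.
rewrite bigA_distr_bigA /= (reindex (fun g : {ffun 'I_n -> T} => \row_i g i)).
  by apply: eq_bigr => g _; apply: eq_bigr => i _; rewrite mxE.
exists (fun x : 'rV[T]_n => [ffun i => x ord0 i]) => [g _|x _].
  by apply/ffunP => i; rewrite ffunE mxE.
by apply/rowP => i; rewrite !mxE ffunE.
Qed.

Lemma natr_forall (V : comPzSemiRingType) (I : finType) (P : pred I) :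
  ([forall i, P i])%:R = \prod_i (P i)%:R :> V.
Proof.
have [/forallP P_all|] := boolP [forall i, P i]; first by rewrite big1 // => i _; rewrite P_all.
by rewrite negb_forall => /existsP[i /negbTE Pi]; rewrite (bigD1 i) //= Pi mul0r.
Qed.

Lemma natr_card (V : pzSemiRingType) (T : finType) (A : {pred T}) :
  #|A|%:R = \sum_x (x \in A)%:R :> V.
Proof. by rewrite -sum1_card natr_sum big_mkcond; apply: eq_bigr => x _; case: (x \in A). Qed.

Lemma sqr_sum_le_card (R : realFieldType) (I : finType) (f : I -> R) :
  (\sum_i f i) ^+ 2 <= #|I|%:R * \sum_i f i ^+ 2.
Proof.
rewrite expr2 mulr_suml; set S := \sum_i f i ^+ 2.
apply: le_trans (_ : \sum_i \sum_j (f i ^+ 2 + f j ^+ 2) / 2 <= _).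
  by apply: ler_sum => i _; rewrite mulr_sumr; apply: ler_sum => j _; exact: leif_mean_square.
have inner i : \sum_j (f i ^+ 2 + f j ^+ 2) / 2 = (#|I|%:R * f i ^+ 2 + S) / 2.
  by rewrite -mulr_suml big_split /= sumr_const -[_ *+ _]mulr_natl.
rewrite (eq_bigr _ (fun i _ => inner i)) -mulr_suml big_split /= -mulr_sumr.
by rewrite sumr_const -[S *+ _]mulr_natl (@eq_card _ xpredT I) // -/S; lra.
Qed.

Lemma exists_arc_shift (R : archiFieldType) (y d : R) : 0 < d -> y <= d ->
  exists j : nat, - d < y + 2 * j%:R * d <= d.
Proof.
move=> d0 yd; have t0 : 0 <= (d - y) / (2 * d) by rewrite divr_ge0 ?subr_ge0 // ltW ?mulr_gt0.
have /andP[jle ltj] := truncn_itv t0; exists (Num.truncn ((d - y) / (2 * d))).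
move: jle ltj; rewrite -natr1 ler_pdivlMr ?ltr_pdivrMr ?mulr_gt0 //.
by move=> ? ?; apply/andP; split; nra.
Qed.

Section Trigonometry.
Variable R : realType.
Implicit Types x y d : R.

Lemma ler_cos : {in `[0, pi] &, {mono (@cos R) : x y /~ x <= y}}.
Proof. by apply: le_nmono_in => x y xI yI ltxy; rewrite ltr_cos. Qed.

Lemma sinD_le_sin_mid x y : 0 <= x <= pi -> 0 <= y <= pi ->
  sin x + sin y <= 2 * sin ((x + y) / 2).
Proof.
move=> /andP[x0 xpi] /andP[y0 ypi]; set s := (x + y) / 2; set e := (x - y) / 2.
have -> : x = s + e by rewrite /s /e; field.
have -> : y = s - e by rewrite /s /e; field.
have sin_s : 0 <= sin s by apply: sin_ge0_pi; rewrite /s; apply/andP; split; lra.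
by rewrite sinD sinB; have := cos_le1 e; nra.
Qed.

Lemma sum_itv_0pi (s : seq R) : all (fun x => 0 <= x <= pi) s ->
  0 <= \sum_(x <- s) x <= (size s)%:R * pi.
Proof.
elim: s => [|a s IH] /=; first by rewrite big_nil mul0r lexx.
move=> /andP[/andP[a0 api] /IH/andP[s0 spi]].
by rewrite big_cons -addn1 natrD mulrDl mul1r; apply/andP; split; lra.
Qed.

Lemma sum_sin_le_dyadic (k : nat) (s : seq R) : size s = (2 ^ k)%N ->
  all (fun x => 0 <= x <= pi) s ->
  \sum_(x <- s) sin x <= (2 ^ k)%:R * sin ((\sum_(x <- s) x) / (2 ^ k)%:R).
Proof.
elim: k s => [|k IH] s; first by case: s => [|a []] //= _ _; rewrite !big_seq1 mul1r divr1.
move=> size_s s0pi; set K : R := (2 ^ k)%:R.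
have K0 : 0 < K by rewrite ltr0n expn_gt0.
rewrite -(cat_take_drop (2 ^ k) s) !big_cat; rewrite -(cat_take_drop (2 ^ k) s) all_cat in s0pi.
set s1 := take _ s; set s2 := drop _ s; case/andP: s0pi => s1_0pi s2_0pi.
have size_s1 : size s1 = (2 ^ k)%N by rewrite size_take size_s expnS ltn_Pmull ?expn_gt0.
have size_s2 : size s2 = (2 ^ k)%N by rewrite size_drop size_s expnS mul2n -addnn addnK.
have mean_0pi (t : seq R) : size t = (2 ^ k)%N -> all (fun x => 0 <= x <= pi) t ->
    0 <= (\sum_(x <- t) x) / K <= pi.
  move=> size_t /sum_itv_0pi; rewrite size_t -/K => /andP[t0 tpi].
  by rewrite divr_ge0 ?(ltW K0) //= ler_pdivrMr // mulrC.
apply: le_trans (lerD (IH _ size_s1 s1_0pi) (IH _ size_s2 s2_0pi)) _.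
rewrite -mulrDr expnS natrM -mulrA -/K mulrCA ler_pM2l //.
apply: le_trans (sinD_le_sin_mid (mean_0pi _ size_s1 s1_0pi) (mean_0pi _ size_s2 s2_0pi)) _.
by rewrite -mulrDl -mulrA -invfM [K * 2]mulrC.
Qed.

Lemma sum_cos_arith y d (m : nat) : sin d != 0 ->
  \sum_(i < m) cos (y + 2 * i%:R * d) = cos (y + (m%:R - 1) * d) * sin (m%:R * d) / sin d.
Proof.
move=> sind0; apply: (mulfI (_ : 2 * sin d != 0)); first by rewrite mulf_neq0.
have -> : 2 * sin d * \sum_(i < m) cos (y + 2 * i%:R * d)
    = sin (y + (2 * m%:R - 1) * d) - sin (y - d).
  elim: m => [|m IH]; first by rewrite big_ord0 !mulr0 sub0r mulN1r subrr.
  rewrite big_ord_recr /= mulrDr IH -[m.+1%:R]natr1; set z := y + 2 * m%:R * d.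
  have -> : y + (2 * (m%:R + 1) - 1) * d = z + d by rewrite /z; ring.
  have -> : y + (2 * m%:R - 1) * d = z - d by rewrite /z; ring.
  by rewrite [sin (z - d)]sinB [sin (z + d)]sinD; ring.
set c := y + (m%:R - 1) * d.
have -> : y + (2 * m%:R - 1) * d = c + m%:R * d by rewrite /c; ring.
have -> : y - d = c - m%:R * d by rewrite /c; ring.
by rewrite sinD sinB; field.
Qed.

End Trigonometry.

Section EquallySpacedAngles.
Variables (R : realType) (n : nat) (d : R).
Hypotheses (d_gt0 : 0 < d) (dn_pi : d * n%:R = pi).

Let dm_le_pi (m : nat) : (m <= n)%N -> d * m%:R <= pi.
Proof. by move=> le_mn; rewrite -dn_pi ler_pM2l // ler_nat. Qed.

Lemma cos_arc_ge (c : R) (m i : nat) : - d < c <= d -> (i < m <= n)%N ->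
  cos (d * m%:R) <= cos (c + (2 * i%:R - m%:R + 1) * d).
Proof.
move=> /andP[c_gt c_le] /andP[lt_im le_mn].
have im : i%:R + 1 <= m%:R :> R by rewrite natr1 ler_nat.
have i0 : 0 <= i%:R :> R by [].
have x_dm : `|c + (2 * i%:R - m%:R + 1) * d| <= d * m%:R.
  by rewrite ler_norml; apply/andP; split; nra.
have dmI : d * m%:R \in `[0, pi] by rewrite in_itv /= dm_le_pi // mulr_ge0 // ltW.
have xI : `|c + (2 * i%:R - m%:R + 1) * d| \in `[0, pi].
  by rewrite in_itv /= normr_ge0 (le_trans x_dm) ?dm_le_pi.
by rewrite -[X in _ <= X]cos_norm ler_cos.
Qed.

Lemma cos_off_arc_le (c : R) (m i : nat) : - d < c <= d -> (m <= i < n)%N ->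
  cos (c + (2 * i%:R - m%:R + 1) * d) <= cos (d * m%:R).
Proof.
move=> /andP[c_gt c_le] /andP[le_mi lt_in].
have mi : m%:R <= i%:R :> R by rewrite ler_nat.
have i_n : i%:R + 1 <= n%:R :> R by rewrite natr1 ler_nat.
have m0 : 0 <= m%:R :> R by [].
set x := c + _ * d.
have dm_x : d * m%:R <= x by rewrite /x; nra.
have x_2pi : x <= pi *+ 2 - d * m%:R by rewrite /x -dn_pi mulr2n; nra.
have dm_pi : d * m%:R <= pi by apply: dm_le_pi; exact: leq_trans le_mi (ltnW lt_in).
have dmI : d * m%:R \in `[0, pi] by rewrite in_itv /= dm_pi mulr_ge0 // ltW.
have [x_pi|pi_x] := lerP x pi.
  by rewrite ler_cos // in_itv /= x_pi andbT (le_trans _ dm_x) // mulr_ge0 // ltW.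
rewrite -[X in cos X](subrK (pi *+ 2)) cosD2pi -cosN opprB ler_cos //; first by rewrite mulr2n; lra.
have dm0 : 0 <= d * m%:R by rewrite mulr_ge0 // ltW.
by rewrite in_itv /=; apply/andP; split; move: x_2pi; rewrite mulr2n; lra.
Qed.

End EquallySpacedAngles.

Local Open Scope complex_scope.

Section ComplexModulus.
Variable R : realType.
Local Notation Re := (@complex.Re R).
Implicit Types (z : R[i]).

Lemma normcE z : `|z| = (normc z)%:C.
Proof. by case: z. Qed.

Lemma normc_ge0 z : 0 <= normc z.
Proof. by case: z => a b; exact: sqrtr_ge0. Qed.

Lemma normc_real (x : R) : normc x%:C = `|x|.
Proof. by rewrite /normc /= expr0n addr0 sqrtr_sqr. Qed.

Lemma normc_conj z : normc z^* = normc z.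
Proof. by case: z => a b; rewrite /normc /= sqrrN. Qed.

Lemma sqr_normc_conj z : (normc z ^+ 2)%:C = z * z^*.
Proof. by rewrite rmorphXn /= -normcE sqr_normc. Qed.

Lemma Re_le_normc z : Re z <= normc z.
Proof. by rewrite -lecR -normcE (le_trans _ (normc_ge_Re z)) // lecR ler_norm. Qed.

Lemma Re_sum (I : Type) (r : seq I) (P : pred I) (f : I -> R[i]) :
  Re (\sum_(i <- r | P i) f i) = \sum_(i <- r | P i) Re (f i).
Proof. by elim/big_rec2: _ => // i y x _ <-; case: (f i); case: x. Qed.

Lemma normc_sum (I : Type) (r : seq I) (P : pred I) (f : I -> R[i]) :
  normc (\sum_(i <- r | P i) f i) <= \sum_(i <- r | P i) normc (f i).
Proof. exact: (@ler_norm_sum _ (Rcomplex R)). Qed.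

Lemma normc_prod (I : Type) (r : seq I) (P : pred I) (f : I -> R[i]) :
  normc (\prod_(i <- r | P i) f i) = \prod_(i <- r | P i) normc (f i).
Proof. exact: (big_morph _ (@normcM R) (@normc1 R)). Qed.

Lemma normc_direction z : exists2 u, normc u = 1 & normc z = Re (u * z).
Proof.
have [->|z0] := eqVneq z 0; first by exists 1; rewrite ?normc1 // mulr0 normc0.
have nz0 : normc z != 0 by apply: contra z0 => /eqP/eq0_normc ->.
exists (z^* / (normc z)%:C); first by rewrite normcM normcV normc_conj normc_real
  ger0_norm ?normc_ge0 ?mulfV.
by rewrite mulrAC [z^* * z]mulrC -sqr_normc_conj -fmorphV -rmorphM expr2 mulfK.
Qed.

Definition cis (t : R) : R[i] := cos t +i* sin t.

Lemma cis0 : cis 0 = 1.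
Proof. by rewrite /cis sin0 cos0. Qed.

Lemma cisD (s t : R) : cis (s + t) = cis s * cis t.
Proof. by rewrite /cis sinD cosD; apply/eqP; rewrite eq_complex /= eqxx addrC eqxx. Qed.

Lemma normc_cis (t : R) : normc (cis t) = 1.
Proof. by rewrite /normc /= cos2Dsin2 sqrtr1. Qed.

Lemma cisMn2pi (t : R) k : cis (t + pi *+ 2 *+ k) = cis t.
Proof. by rewrite /cis (periodicn (@cosD2pi R)) (periodicn (@sinD2pi R)). Qed.

Lemma unit_cis z : normc z = 1 -> exists2 t, z = cis t & - pi <= t <= pi.
Proof.
case: z => a b; rewrite /normc => h1.
have hab : a ^+ 2 + b ^+ 2 = 1 by rewrite -[LHS]sqr_sqrtr ?addr_ge0 ?sqr_ge0 // h1 expr1n.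
have ha : -1 <= a <= 1 by have := sqr_ge0 b => ?; apply/andP; split; nra.
have cosa : cos (acos a) = a by rewrite acosK // in_itv.
have sina : sin (acos a) = `|b| by rewrite sin_acos // -hab addrAC subrr add0r sqrtr_sqr.
have := acos_ge0 ha; have := acos_lepi ha; have [b0|b0] := leP 0 b => ? ?.
  exists (acos a); last by apply/andP; split; lra.
  by rewrite /cis cosa sina ger0_norm.
exists (- acos a); last by apply/andP; split; lra.
by rewrite /cis cosN sinN cosa sina ltr0_norm ?opprK.
Qed.

(* Rotate every class sum onto the positive real axis; reassigning each value
   [u] to the class whose rotation maximises [Re (dir b * w u)] can only increase
   the total, and the new classes depend on [x] only through [L x]. *)
Lemma sum_class_sums_pullback (T U B : finType) (L : T -> U) (r : nat) (b0 : B)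
    (w : U -> R[i]) (beta : T -> B) :
  (forall u, #|[set x | L x == u]| = r) ->
  exists gamma : U -> B, \sum_b normc (\sum_(x | beta x == b) w (L x))
    <= r%:R * \sum_b normc (\sum_(u | gamma u == b) w u).
Proof.
move=> L_fib; set z := fun b => \sum_(x | beta x == b) w (L x).
have dir_ex b : exists u, normc u = 1 /\ normc (z b) = Re (u * z b).
  by have [u ? ?] := normc_direction (z b); exists u.
have [dir dirP] := choice dir_ex.
pose gamma u := Order.arg_max b0 xpredT (fun b => Re (dir b * w u)); exists gamma.
have gammaP u b : Re (dir b * w u) <= Re (dir (gamma u) * w u).
  by rewrite /gamma; case: (arg_maxP (fun b => Re (dir b * w u)) (isT : xpredT b0)) => b' _; apply.
have classes (V : Type) (g : V -> B) (s : seq V) (F : B -> V -> R) :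
    \sum_(v <- s) F (g v) v = \sum_b \sum_(v <- s | g v == b) F b v.
  by rewrite (partition_big g xpredT) //=; apply: eq_bigr => b _; apply: eq_bigr => v /eqP ->.
have Re_dir_sum (V : Type) (g : V -> B) (s : seq V) (F : V -> R[i]) b :
    Re (dir b * \sum_(v <- s | g v == b) F v) = \sum_(v <- s | g v == b) Re (dir b * F v).
  by rewrite mulr_sumr Re_sum.
have fiber_sum (F : U -> R) : \sum_x F (L x) = r%:R * \sum_u F u.
  rewrite (partition_big L xpredT) //= mulr_sumr; apply: eq_bigr => u _.
  rewrite (eq_bigr (fun=> F u)) => [|x /eqP ->//]; rewrite sumr_const mulr_natl -(L_fib u).
  by congr (_ *+ _); apply: eq_card => x; rewrite inE.
have -> : \sum_b normc (z b) = \sum_x Re (dir (beta x) * w (L x)).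
  rewrite (classes _ beta _ (fun b x => Re (dir b * w (L x)))).
  by apply: eq_bigr => b _; rewrite (proj2 (dirP b)) Re_dir_sum.
apply: le_trans (ler_sum _ (fun x _ => gammaP (L x) (beta x))) _.
rewrite (fiber_sum (fun u => Re (dir (gamma u) * w u))) ler_wpM2l //.
rewrite (classes _ gamma _ (fun b u => Re (dir b * w u))) ler_sum // => b _.
by rewrite -Re_dir_sum (le_trans (Re_le_normc _)) // normcM (proj1 (dirP b)) mul1r.
Qed.

End ComplexModulus.

Section RootsOfUnity.
Variable R : realType.
Local Notation Re := (@complex.Re R).
Variable p : nat.
Hypothesis p_pr : prime p.

Let pR_gt0 : 0 < p%:R :> R. Proof. by rewrite ltr0n prime_gt0. Qed.

Definition ang (k : nat) : R := pi *+ 2 * k%:R / p%:R.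

Definition ep (u : 'F_p) : R[i] := cis (ang u).

Lemma angD a b : ang (a + b) = ang a + ang b.
Proof. by rewrite /ang natrD mulrDr mulrDl. Qed.

Lemma ep_nat k : ep k%:R = cis (ang k).
Proof.
rewrite /ep Zp_nat /= Fp_cast //.
have -> : ang k = ang (k %% p) + pi *+ 2 *+ (k %/ p).
  rewrite {1}(divn_eq k p) addnC angD; congr (_ + _).
  by rewrite /ang natrM mulrA mulfK ?gt_eqF // mulr_natr.
by rewrite cisMn2pi.
Qed.

Lemma ep0 : ep 0 = 1.
Proof. by rewrite /ep /ang mulr0 mul0r cis0. Qed.

Lemma epD u v : ep (u + v) = ep u * ep v.
Proof. by rewrite -[u]natr_Zp -[v]natr_Zp -natrD !ep_nat angD cisD. Qed.

Lemma normc_ep u : normc (ep u) = 1.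
Proof. exact: normc_cis. Qed.

Lemma ep_conj u : (ep u)^* = ep (- u).
Proof.
have ep_unit : ep u * (ep u)^* = 1 by rewrite -sqr_normc_conj normc_ep expr1n.
have ep_neq0 : ep u != 0 by apply: contra_eq_neq ep_unit => ->; rewrite mul0r eq_sym oner_neq0.
by apply: (mulfI ep_neq0); rewrite ep_unit -epD subrr ep0.
Qed.

Lemma ep_neq1 u : u != 0 -> ep u != 1.
Proof.
move=> u0; apply/eqP => /(congr1 Re); rewrite /ep /= => cos1.
have u_gt0 : 0 < (val u)%:R :> R.
  by rewrite ltr0n lt0n; apply: contra u0 => /eqP val_u0; apply/eqP/val_inj.
have u_ltp : (val u)%:R < p%:R :> R by rewrite ltr_nat -[X in (_ < X)%N](Fp_cast p_pr) ltn_ord.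
have sin_half : 0 < sin (ang u / 2).
  have -> : ang u / 2 = pi * ((val u)%:R / p%:R) by rewrite /ang mulr2n; field; rewrite gt_eqF.
  apply: sin_gt0_pi.
  have q0 : 0 < (val u)%:R / p%:R :> R by exact: divr_gt0.
  have q1 : (val u)%:R / p%:R < 1 :> R by rewrite ltr_pdivrMr // mul1r.
  by have := pi_gt0 R => ?; apply/andP; split; nra.
move: cos1; rewrite -[ang u](divfK (_ : 2 != 0 :> R)) // mulr_natr cos_mulr2n cos2sin2.
nra.
Qed.

Local Notation d := (pi / p%:R : R).

Let d_gt0 : 0 < d. Proof. by rewrite divr_gt0 ?pi_gt0. Qed.
Let dp_pi : d * p%:R = pi. Proof. by rewrite divfK ?gt_eqF. Qed.

Lemma sin_pi_div_gt0 : 0 < sin d.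
Proof.
by rewrite sin_gt0_pi // d_gt0 ltr_pdivrMr // ltr_pMr ?pi_gt0 // ltr1n prime_gt1.
Qed.

Lemma sum_cos_arc_le (c : R) (m : nat) : (m <= p)%N ->
  \sum_(i < m) cos (c + (2 * i%:R - m%:R + 1) * d) <= sin (m%:R * d) / sin d.
Proof.
move=> m_le_p; have md_pi : 0 <= m%:R * d <= pi.
  by rewrite mulr_ge0 ?(ltW d_gt0) //= mulrC -[X in _ <= X]dp_pi ler_pM2l // ler_nat.
rewrite (eq_bigr (fun i : 'I_m => cos (c - (m%:R - 1) * d + 2 * i%:R * d))) => [|i _].
  rewrite sum_cos_arith ?gt_eqF ?sin_pi_div_gt0 // subrK ler_pM2r ?invr_gt0 ?sin_pi_div_gt0 //.
  by rewrite ler_piMl ?cos_le1 ?sin_ge0_pi.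
by congr cos; ring.
Qed.

(* Rearrangement: [cos (th + ang j) >= cos (d * m)] exactly on a block of [m]
   consecutive residues, so moving [G] onto that block can only increase the sum. *)
Lemma Re_cis_sum_ep_le (th : R) (G : {set 'F_p}) : - pi <= th <= pi ->
  Re (cis th * \sum_(j in G) ep j) <= sin (#|G|%:R * d) / sin d.
Proof.
move=> /andP[th_ge th_le]; set m := #|G|; set lam := cos (d * m%:R).
have m_le_p : (m <= p)%N by rewrite -(card_Fp p_pr) max_card.
(* Shifting [th] by [-2 pi] makes the start [j0] of the block a natural number. *)
have [j0 /andP[c_gt c_le]] :
    exists j : nat, - d < (th - pi *+ 2 + (m%:R - 1) * d) + 2 * j%:R * d <= d.
  apply: exists_arc_shift => //.
  have := d_gt0; have : d * m%:R <= pi by rewrite -[X in _ <= X]dp_pi ler_pM2l // ler_nat.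
  by rewrite mulr2n; lra.
set c := _ + 2 * j0%:R * d in c_gt c_le.
have Re_shift (j : 'F_p) : Re (cis th * ep (j0%:R + j)) = cos (c + (2 * (val j)%:R - m%:R + 1) * d).
  rewrite -[j in j0%:R + j]natr_Zp -natrD ep_nat // -cisD /= -[in RHS]cosD2pi; congr cos.
  by rewrite /c /ang natrD mulr2n; field; rewrite gt_eqF.
set g := fun j : 'F_p => Re (cis th * ep (j0%:R + j)) - lam.
have -> : Re (cis th * \sum_(j in G) ep j) = \sum_(j | j0%:R + j \in G) g j + m%:R * lam.
  have sum_lam : \sum_(j in G) lam = m%:R * lam by rewrite sumr_const mulr_natl.
  apply/eqP; rewrite -subr_eq -sum_lam mulr_sumr Re_sum -sumrB.
  by rewrite (reindex_inj (addrI (j0%:R : 'F_p))).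
have lt_jp (j : 'F_p) : (j < p)%N by rewrite -[X in (_ < X)%N](Fp_cast p_pr) ltn_ord.
apply: le_trans (_ : \sum_(j : 'F_p | (j < m)%N) g j + m%:R * lam <= _).
  rewrite lerD2r; apply: ler_sum_sign => j.
    move=> _; rewrite -leqNgt /g Re_shift subr_le0 => le_mj.
    by apply: (cos_off_arc_le d_gt0 dp_pi); rewrite ?c_gt ?c_le ?le_mj ?lt_jp.
  move=> lt_jm _; rewrite /g Re_shift subr_ge0.
  by apply: (cos_arc_ge d_gt0 dp_pi); rewrite ?c_gt ?c_le ?lt_jm ?m_le_p.
have m_le : (m <= (Zp_trunc (pdiv p)).+2)%N by rewrite Fp_cast.
set f := fun i : nat => cos (c + (2 * i%:R - m%:R + 1) * d).
rewrite (eq_bigr (fun j : 'F_p => f j - lam)) => [|j _]; last by rewrite /g Re_shift.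
rewrite -(big_ord_widen _ (fun i => f i - lam) m_le) sumrB sumr_const card_ord mulr_natl subrK.
exact: sum_cos_arc_le.
Qed.

Lemma normc_sum_ep_le (G : {set 'F_p}) :
  normc (\sum_(j in G) ep j) <= sin (#|G|%:R * d) / sin d.
Proof.
have [u u1 ->] := normc_direction (\sum_(j in G) ep j).
by have [th -> th_range] := unit_cis u1; exact: Re_cis_sum_ep_le.
Qed.

Lemma sum_class_sums_ep_le (B : finType) (k : nat) (beta : 'F_p -> B) : #|B| = (2 ^ k)%N ->
  \sum_b normc (\sum_(j | beta j == b) ep j)
    <= (2 ^ k)%:R * sin (pi / (2 ^ k)%:R) / sin (pi / p%:R).
Proof.
move=> card_B.
set cls := fun b => #|[set j | beta j == b]|.
have normc_cls b : normc (\sum_(j | beta j == b) ep j) <= sin ((cls b)%:R * d) / sin d.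
  rewrite (eq_bigl (fun j => j \in [set j | beta j == b])) => [|j]; last by rewrite inE.
  exact: normc_sum_ep_le.
apply: le_trans (ler_sum _ (fun b _ => normc_cls b)) _; rewrite -mulr_suml ler_pM2r; last first.
  by rewrite invr_gt0 sin_pi_div_gt0.
set s := [seq (cls b)%:R * d | b <- enum B].
have sum_s : \sum_(x <- s) x = pi.
  rewrite big_map big_enum /= -mulr_suml -natr_sum.
  by rewrite sum_card_fibers card_Fp // mulrC divfK // pnatr_eq0 -lt0n prime_gt0.
have s_0pi : all (fun x => 0 <= x <= pi) s.
  apply/allP => _ /mapP[b _ ->]; apply/andP; split; first by rewrite mulr_ge0 // ltW.
  rewrite /d mulrA ler_pdivrMr ?ltr0n ?prime_gt0 // mulrC ler_pM2l ?pi_gt0 // ler_nat.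
  by rewrite -[X in (_ <= X)%N](card_Fp p_pr) max_card.
have size_s : size s = (2 ^ k)%N by rewrite size_map -cardE card_B.
by have := sum_sin_le_dyadic size_s s_0pi; rewrite sum_s big_map big_enum.
Qed.

Lemma sum_class_sums_le (T B : finType) (L : T -> 'F_p) (r k : nat) (beta : T -> B) :
  (forall u, #|[set x | L x == u]| = r) -> #|B| = (2 ^ k)%N ->
  \sum_b normc (\sum_(x | beta x == b) ep (L x))
    <= r%:R * ((2 ^ k)%:R * sin (pi / (2 ^ k)%:R) / sin (pi / p%:R)).
Proof.
move=> L_fib card_B; have /card_gt0P[b0 _] : (0 < #|B|)%N by rewrite card_B expn_gt0.
have [gamma /le_trans->//] := sum_class_sums_pullback b0 ep beta L_fib.
by rewrite ler_wpM2l // sum_class_sums_ep_le.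
Qed.

End RootsOfUnity.

Section DotProduct.
Variables (K : comPzRingType) (d : nat).
Implicit Types v w a b : 'rV[K]_d.

Definition dotv v a : K := \sum_j v ord0 j * a ord0 j.

Lemma dotvC v a : dotv v a = dotv a v.
Proof. by apply: eq_bigr => j _; rewrite mulrC. Qed.

Lemma dotvDl v w a : dotv (v + w) a = dotv v a + dotv w a.
Proof. by rewrite /dotv -big_split; apply: eq_bigr => j _; rewrite mxE mulrDl. Qed.

Lemma dotvDr v a b : dotv v (a + b) = dotv v a + dotv v b.
Proof. by rewrite dotvC dotvDl !(dotvC _ v). Qed.

Lemma dotvZl c v a : dotv (c *: v) a = c * dotv v a.
Proof. by rewrite /dotv mulr_sumr; apply: eq_bigr => j _; rewrite mxE mulrA. Qed.

Lemma dotv0 v : dotv v 0 = 0.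
Proof. by rewrite /dotv big1 // => j _; rewrite mxE mulr0. Qed.

Lemma dotv_delta v j : dotv v (delta_mx ord0 j) = v ord0 j.
Proof.
rewrite /dotv (bigD1 j) //= mxE !eqxx mulr1 big1 ?addr0 // => j' j'j.
by rewrite mxE eqxx /= (negbTE j'j) mulr0.
Qed.

Lemma rV_neq0_coord v : v != 0 -> exists j, v ord0 j != 0.
Proof.
move=> v0; apply/existsP; apply: contraR v0 => /existsPn v_coord0.
by apply/eqP/rowP => j; rewrite mxE; apply/eqP/negPn.
Qed.

End DotProduct.

Section FourierBound.
Variable R : realType.
Variables (F : finFieldType) (K : finType) (k0 : K) (chi : K -> F -> R[i]).
Hypotheses (chiD : forall k x y, chi k (x + y) = chi k x * chi k y)
  (chi_conj : forall k x, (chi k x)^* = chi k (- x))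
  (chi_at0 : forall k, chi k 0 = 1) (chi_k0 : forall x, chi k0 x = 1)
  (sum_chi_at : forall x, \sum_k chi k x = if x == 0 then #|F|%:R else 0)
  (sum_chi_eq0 : forall k, k != k0 -> \sum_x chi k x = 0).
Local Notation q := #|F|.

Let q_neq0 : q%:R != 0 :> R[i].
Proof. by rewrite pnatr_eq0 -lt0n; apply/card_gt0P; exists 0. Qed.

Lemma parseval (A : {set F}) : \sum_k normc (\sum_(z in A) chi k z) ^+ 2 = q%:R * #|A|%:R.
Proof.
apply: (@complexI R); rewrite rmorph_sum rmorphM /= !rmorph_nat.
under eq_bigr do rewrite sqr_normc_conj rmorph_sum mulr_suml.
have pair_sum k : \sum_(z in A) chi k z * \sum_(z' in A) (chi k z')^*%C
    = \sum_(z in A) \sum_(z' in A) chi k (z - z').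
  by apply: eq_bigr => z _; rewrite mulr_sumr; apply: eq_bigr => z' _; rewrite chi_conj chiD.
under eq_bigr do rewrite pair_sum.
rewrite exchange_big /= (eq_bigr (fun=> q%:R)) => [|z zA]; first by rewrite sumr_const mulr_natr.
rewrite exchange_big /= (bigD1 z zA) /= sum_chi_at subrr eqxx big1 ?addr0 // => z' /andP[_ z'z].
by rewrite sum_chi_at subr_eq0 eq_sym (negbTE z'z).
Qed.

Lemma chi_sum k n (x : 'rV[F]_n) : chi k (\sum_i x ord0 i) = \prod_i chi k (x ord0 i).
Proof. exact: (big_morph (chi k) (chiD k) (chi_at0 k)). Qed.

Lemma natr_eq0_chi (x : F) : (x == 0)%:R = q%:R^-1 * \sum_k chi k x :> R[i].
Proof. by rewrite sum_chi_at; case: eqP => _; rewrite ?mulr0 ?mulVf. Qed.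

Variables (mu m : nat).
Local Notation n := m.+2.
Variable tau : 'I_n -> F -> mu.-tuple bool.

Definition class_sum i k b := \sum_(z | tau i z == b) chi k z.

Definition class_norm i k := \sum_b normc (class_sum i k b).

Lemma class_sumE i k b : class_sum i k b = \sum_z chi k z * (tau i z == b)%:R.
Proof.
by rewrite /class_sum big_mkcond; apply: eq_bigr => z _; case: eqP; rewrite ?mulr1 ?mulr0.
Qed.

Lemma leak_eq x y : (leak tau x == y) = [forall i, tau i (x ord0 i) == y i].
Proof.
apply/eqP/forallP => [<- i|tau_x]; first by rewrite ffunE.
by apply/ffunP => i; rewrite ffunE; apply/eqP/tau_x.
Qed.

Lemma card_leak_full y :
  #|[set x in full_space F n | leak tau x == y]|%:R = \prod_i class_sum i k0 (y i).
Proof.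
rewrite natr_card (eq_bigr (fun x : 'rV[F]_n => \prod_i (tau i (x ord0 i) == y i)%:R)).
  rewrite (sum_prod_rV (fun i z => (tau i z == y i)%:R)); apply: eq_bigr => i _.
  by rewrite class_sumE; apply: eq_bigr => z _; rewrite chi_k0 mul1r.
by move=> x _; rewrite !inE leak_eq natr_forall.
Qed.

Lemma card_leak_code y :
  #|[set x in sum_zero_code F n | leak tau x == y]|%:R
    = q%:R^-1 * \sum_k \prod_i class_sum i k (y i).
Proof.
rewrite natr_card (eq_bigr (fun x : 'rV[F]_n => q%:R^-1 * \sum_k
    \prod_i (chi k (x ord0 i) * (tau i (x ord0 i) == y i)%:R))); last first.
  move=> x _; rewrite !inE -mulnb natrM leak_eq natr_forall natr_eq0_chi -mulrA mulr_suml.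
  by congr (_ * _); apply: eq_bigr => k _; rewrite chi_sum big_split.
rewrite -mulr_sumr exchange_big /=; congr (_ * _); apply: eq_bigr => k _.
rewrite (sum_prod_rV (fun i z => chi k z * (tau i z == y i)%:R)).
by apply: eq_bigr => i _; rewrite class_sumE.
Qed.

Lemma card_sum_zero_code : #|sum_zero_code F n|%:R = q%:R ^+ m.+1 :> R[i].
Proof.
rewrite natr_card (eq_bigr (fun x : 'rV[F]_n => q%:R^-1 * \sum_k \prod_i chi k (x ord0 i))).
  rewrite -mulr_sumr exchange_big /= (eq_bigr (fun k => \prod_(i < n) \sum_z chi k z)).
    rewrite (bigD1 k0) //= [X in _ + X]big1 ?addr0 => [|k k_k0]; last first.
      by rewrite prodr_const sum_chi_eq0 // card_ord expr0n.
    rewrite (eq_bigr (fun=> q%:R)) => [|i _]; first by rewrite prodr_const card_ord exprS mulKf.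
    by rewrite (eq_bigr (fun=> 1)) ?sumr_const // => z _; rewrite chi_k0.
  by move=> k _; exact: (sum_prod_rV (fun=> chi k)).
by move=> x _; rewrite !inE natr_eq0_chi; under eq_bigr do rewrite chi_sum.
Qed.

Lemma leak_dist_diff y :
  (leak_dist R tau (sum_zero_code F n) y - leak_dist R tau (full_space F n) y)%:C
    = ((q%:R ^+ n)^-1)%:C * \sum_(k | k != k0) \prod_i class_sum i k (y i).
Proof.
rewrite /leak_dist rmorphB /= !fmorph_div /= !rmorph_nat card_leak_code card_leak_full.
rewrite card_sum_zero_code /full_space cardsT card_mx mul1n natrX (bigD1 k0) //=.
by rewrite fmorphV rmorphXn /= rmorph_nat !exprS; field; rewrite expf_neq0.
Qed.

Lemma sum_abs_leak_dist_diff_le :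
  \sum_y `|leak_dist R tau (sum_zero_code F n) y - leak_dist R tau (full_space F n) y|
    <= (q%:R ^+ n)^-1 * \sum_(k | k != k0) \prod_i class_norm i k.
Proof.
have -> : \sum_(k | k != k0) \prod_i class_norm i k
    = \sum_(y : {ffun 'I_n -> mu.-tuple bool})
        \sum_(k | k != k0) \prod_i normc (class_sum i k (y i)).
  by rewrite exchange_big /=; apply: eq_bigr => k _; rewrite bigA_distr_bigA.
rewrite mulr_sumr ler_sum // => y _.
rewrite -normc_real leak_dist_diff normcM normc_real ger0_norm ?invr_ge0 ?exprn_ge0 //.
rewrite ler_wpM2l ?invr_ge0 ?exprn_ge0 // (le_trans (normc_sum _ _ _)) // ler_sum // => k _.
by rewrite normc_prod.
Qed.

Local Notation N := #|{: mu.-tuple bool}|.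

Lemma sum_class_norm_sqr_le i : \sum_k class_norm i k ^+ 2 <= N%:R * q%:R ^+ 2.
Proof.
apply: le_trans (ler_sum _ (fun k _ => sqr_sum_le_card (fun b => normc (class_sum i k b)))) _.
rewrite -mulr_sumr exchange_big /= ler_wpM2l //.
rewrite (eq_bigr (fun b => q%:R * #|[set z | tau i z == b]|%:R)) => [|b _].
  by rewrite -mulr_sumr -natr_sum sum_card_fibers expr2.
rewrite -parseval; apply: eq_bigr => k _; rewrite /class_sum.
by rewrite (eq_bigl (fun z => z \in [set z | tau i z == b])) // => z; rewrite inE.
Qed.

Lemma sum_class_norm_mul_le i j : \sum_k class_norm i k * class_norm j k <= N%:R * q%:R ^+ 2.
Proof.
apply: le_trans (_ : \sum_k (class_norm i k ^+ 2 + class_norm j k ^+ 2) / 2 <= _).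
  by apply: ler_sum => k _; exact: leif_mean_square.
rewrite -mulr_suml big_split /=.
by have := sum_class_norm_sqr_le i; have := sum_class_norm_sqr_le j; lra.
Qed.

Lemma SD_leak_le (c : R) : 0 <= c ->
    (forall k, k != k0 -> forall beta : F -> mu.-tuple bool,
      \sum_b normc (\sum_(x | beta x == b) chi k x) <= q%:R * c) ->
  SD (leak_dist R tau (sum_zero_code F n)) (leak_dist R tau (full_space F n))
    <= 2^-1 * N%:R * c ^+ m.
Proof.
move=> c_ge0 class_norm_le; have q_gt0 : 0 < q%:R :> R by rewrite ltr0n; apply/card_gt0P; exists 0.
have norm_ge0 i k : 0 <= class_norm i k by apply: sumr_ge0 => b _; exact: normc_ge0.
set i0 : 'I_n := ord0; set i1 : 'I_n := lift ord0 ord0.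
have prod_le k : k != k0 ->
    \prod_i class_norm i k <= class_norm i0 k * class_norm i1 k * (q%:R * c) ^+ m.
  move=> k_k0; rewrite big_ord_recl big_ord_recl mulrA ler_wpM2l ?mulr_ge0 //.
  rewrite -[m in X in _ <= X]card_ord -prodr_const ler_prod // => i _.
  by rewrite norm_ge0 class_norm_le.
rewrite /SD -mulrA ler_wpM2l // (le_trans sum_abs_leak_dist_diff_le) //.
apply: le_trans (_ : (q%:R ^+ n)^-1 * ((q%:R * c) ^+ m * (N%:R * q%:R ^+ 2)) <= _).
  rewrite ler_wpM2l ?invr_ge0 ?exprn_ge0 ?(ltW q_gt0) //; apply: le_trans (ler_sum _ prod_le) _.
  rewrite -mulr_suml mulrC ler_wpM2l ?exprn_ge0 ?mulr_ge0 ?(ltW q_gt0) //.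
  rewrite (le_trans _ (sum_class_norm_mul_le i0 i1)) // [X in _ <= X](bigD1 k0) //= lerDr.
  by rewrite mulr_ge0.
by rewrite exprMn !exprS le_eqVlt; apply/orP; left; apply/eqP; field; rewrite expf_neq0 ?gt_eqF.
Qed.

End FourierBound.

Section FieldCharacters.
Variable R : realType.
Variable p : nat.
Hypothesis p_pr : prime p.
Local Notation ep := (@ep R p).
Variables (F : finFieldType) (d : nat) (phi : F -> 'rV['F_p]_d).
Hypotheses (phiD : {morph phi : x y / x + y}) (phi_bij : bijective phi).

Let phi0 : phi 0 = 0.
Proof. by apply: (addrI (phi 0)); rewrite -phiD !addr0. Qed.

Let phiN x : phi (- x) = - phi x.
Proof. by apply/eqP; rewrite -subr_eq0 opprK -phiD addNr phi0. Qed.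

Lemma card_dotv_fiber a u : a != 0 ->
  #|[set v : 'rV['F_p]_d | dotv v a == u]| = #|[set v : 'rV['F_p]_d | dotv v a == 0]|.
Proof.
move=> a0; have [j aj0] := rV_neq0_coord a0.
pose w : 'rV['F_p]_d := (u / a ord0 j) *: delta_mx ord0 j.
have dotv_w : dotv w a = u by rewrite dotvZl dotvC dotv_delta mulfVK.
rewrite -!sum1_card (reindex_inj (addIr w)) /=; apply: eq_bigl => v.
by rewrite !inE dotvDl dotv_w -{2}[u]add0r (inj_eq (addIr u)).
Qed.

Lemma sum_ep_dotv (v : 'rV['F_p]_d) : \sum_a ep (dotv v a) = if v == 0 then (p ^ d)%:R else 0.
Proof.
have [->|v0] := eqVneq v 0.
  rewrite (eq_bigr (fun=> 1)) => [|a _]; last by rewrite dotvC dotv0 ep0.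
  by rewrite sumr_const card_mx card_Fp // mul1n.
have [j vj0] := rV_neq0_coord v0; set S := \sum_a ep (dotv v a).
have S_shift : S = S * ep (v ord0 j).
  rewrite {1}/S (reindex_inj (addIr (delta_mx ord0 j))) /= mulr_suml.
  by apply: eq_bigr => a _; rewrite dotvDr dotv_delta epD.
apply/eqP; move/eqP: S_shift; rewrite -subr_eq0 -{1}[S]mulr1 -mulrBr mulf_eq0.
by rewrite subr_eq0 [1 == _]eq_sym (negbTE (ep_neq1 _ p_pr vj0)) orbF.
Qed.

Definition chi (a : 'rV['F_p]_d) (x : F) : R[i] := ep (dotv (phi x) a).

Lemma chiD a x y : chi a (x + y) = chi a x * chi a y.
Proof. by rewrite /chi phiD dotvDl epD. Qed.

Lemma chi_conj a x : (chi a x)^* = chi a (- x).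
Proof. by rewrite /chi ep_conj // phiN -scaleN1r dotvZl mulN1r. Qed.

Lemma chi_at0 a : chi a 0 = 1.
Proof. by rewrite /chi phi0 dotvC dotv0 ep0. Qed.

Lemma chi0 x : chi 0 x = 1.
Proof. by rewrite /chi dotv0 ep0. Qed.

Lemma card_F : #|F| = (p ^ d)%N.
Proof. by rewrite (bij_eq_card phi_bij) card_mx card_Fp // mul1n. Qed.

Lemma sum_chi_at x : \sum_a chi a x = if x == 0 then #|F|%:R else 0.
Proof.
rewrite sum_ep_dotv card_F; congr (if _ then _ else _).
by apply/eqP/eqP => [phix0|->//]; apply: (bij_inj phi_bij); rewrite phix0.
Qed.

Lemma sum_chi_eq0 a : a != 0 -> \sum_x chi a x = 0.
Proof.
move=> a0; have -> : \sum_x chi a x = \sum_(v : 'rV['F_p]_d) ep (dotv v a).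
  by rewrite (reindex phi) //; exact: onW_bij.
by under eq_bigr do rewrite dotvC; rewrite sum_ep_dotv (negbTE a0).
Qed.

Lemma card_dotv_phi_fiber a u : a != 0 ->
  #|[set x | dotv (phi x) a == u]| = #|[set v : 'rV['F_p]_d | dotv v a == 0]|.
Proof.
move=> a0; rewrite -(card_dotv_fiber u a0) -(card_imset _ (bij_inj phi_bij)).
apply: eq_card => v; rewrite inE; apply/imsetP/idP => [[x] /[!inE] /eqP <- ->//|vP].
by case: phi_bij => g phiK gK; exists (g v); rewrite ?inE gK.
Qed.

Lemma c_mu_ge0 mu : 0 <= c_mu R p mu.
Proof.
have pow_gt0 : 0 < 2 ^+ mu :> R by rewrite exprn_gt0.
have sin_ge0 : 0 <= sin (pi / 2 ^+ mu) :> R.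
  rewrite sin_ge0_pi // divr_ge0 ?pi_ge0 ?(ltW pow_gt0) //= ler_pdivrMr // ler_peMr ?pi_ge0 //.
  by rewrite exprn_ege1 // ler1n.
rewrite /c_mu divr_ge0 ?mulr_ge0 ?(ltW pow_gt0) //.
by rewrite ltW // sin_pi_div_gt0.
Qed.

Lemma sum_class_sums_chi_le mu a (beta : F -> mu.-tuple bool) : a != 0 ->
  \sum_b normc (\sum_(x | beta x == b) chi a x) <= #|F|%:R * c_mu R p mu.
Proof.
move=> a0; set r := #|[set v : 'rV['F_p]_d | dotv v a == 0]|.
have card_F_fib : #|F| = (p * r)%N.
  rewrite -(sum_card_fibers (fun x => dotv (phi x) a)) (eq_bigr (fun=> r)) => [|u _].
    by rewrite sum_nat_const card_Fp.
  exact: card_dotv_phi_fiber.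
have := sum_class_sums_le R p_pr beta (fun u => card_dotv_phi_fiber u a0) (k := mu).
rewrite card_tuple card_bool => /(_ erefl) /le_trans->//.
rewrite card_F_fib natrM /c_mu natrX le_eqVlt; apply/orP; left; apply/eqP.
by field; rewrite !gt_eqF ?sin_pi_div_gt0 ?ltr0n ?prime_gt0.
Qed.

Lemma SD_leak_le_c_mu mu m (tau : 'I_m.+2 -> F -> mu.-tuple bool) :
  SD (leak_dist R tau (sum_zero_code F m.+2)) (leak_dist R tau (full_space F m.+2))
    <= 2^-1 * 2 ^+ mu * c_mu R p mu ^+ m.
Proof.
have := SD_leak_le chiD chi_conj chi_at0 chi0 sum_chi_at sum_chi_eq0 tau (c_mu_ge0 mu)
  (fun a a0 beta => sum_class_sums_chi_le beta a0).
by rewrite card_tuple card_bool natrX.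
Qed.

End FieldCharacters.

Theorem corollary5p2 (R : realType) (F : finFieldType) (p w n mu : nat)
  (hp : prime p) (hw : (1 <= w)%N) (hn : (2 <= n)%N) (hmu : (1 <= mu)%N)
  (hmup : (2 ^ mu < p)%N) (hF : #|F| = (p ^ w)%N)
  (tau : 'I_n -> F -> mu.-tuple bool) :
  SD (leak_dist R tau (sum_zero_code F n)) (leak_dist R tau (full_space F n))
    <= 2^-1 * 2 ^+ mu * (c_mu R p mu) ^+ (n - 2).
Proof.
(* The bound holds for all [mu] and [w]. *)
have [phi phi_lin phi_bij] := pprimeChar_vectAxiom (card_finPcharP hF hp).
have phiD : {morph phi : x y / x + y} by move=> x y; have := phi_lin 1 x y; rewrite !scale1r.
case: n hn tau => [|[|m]] // _ tau; rewrite subSS subn1.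
exact: (SD_leak_le_c_mu R hp (F := F) phiD phi_bij tau).
Qed.
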